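(* Let $\Omega\subset\mathbb{R}^n$ ($n\ge1$) be a bounded domain, $T>0$, $\delta\in(0,1)\cup(1,2)$, $\bar Q:=\bar\Omega\times[0,T]$ and $Q:=\Omega\times(0,T]$. Let $u$ be a classical solution of the initial-boundary value problem described in the context, and suppose $u\in C^{2,\bar\delta}(\bar Q)$. Suppose moreover that the boundary value problem \[ L_0w(x)=f(x,0)\ \text{ for } x\in\Omega,\qquad w(x)=\psi(x,0)\ \text{ for } x\in\partial\Omega \] has at most one solution $w$, where $L_0w(x):=-\sum_{i,j=1}^n p_{ij}(x,0)\,\partial^2 w/\partial x_i\partial x_j+\sum_{i=1}^n q_i(x,0)\,\partial w/\partial x_i+r(x,0)w$. Then the initial value $\phi_0$ is a solution of this boundary value problem and hence is uniquely determined by $L_0$, $f(\cdot,0)$ and $\psi(\cdot,0)$ (it is the unique solution of that problem).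
   Context: Set $\bar\delta=1$ if $0<\delta<1$ and $\bar\delta=2$ if $1<\delta<2$. The Caputo fractional derivative is \[ D_t^\delta g(x,t):=\frac{1}{\Gamma(\bar\delta-\delta)}\int_0^t (t-s)^{\bar\delta-\delta-1}\,\frac{\partial^{\bar\delta}g(x,s)}{\partial s^{\bar\delta}}\,ds,\qquad x\in\Omega,\ 0<t\le T. \] The problem is: $D_t^\delta u-\sum_{i,j=1}^n p_{ij}(x,t)\,\partial^2u/\partial x_i\partial x_j+\sum_{i=1}^n q_i(x,t)\,\partial u/\partial x_i+r(x,t)u=f(x,t)$ for $(x,t)\in Q$; $u(x,t)=\psi(x,t)$ for $(x,t)\in\partial\Omega\times(0,T]$; $u(x,0)=\phi_0(x)$ for $x\in\bar\Omega$; and, only when $1<\delta<2$, $u_t(x,0)=\phi_1(x)$ for $x\in\Omega$. The spatial operator is uniformly elliptic on $Q$; $p_{ij},q_i,r,\psi,\phi_0,\phi_1$ are continuous on the closures of their domains; $f$ is continuous on $\bar Q$; and $\phi_0(x)=\psi(x,0)$ for all $x\in\partial\Omega$. A classical solution is a function $u$ continuous on $\bar Q$ for which $D_t^\delta u$, $\partial u/\partial x_i$, $\partial^2u/\partial x_i\partial x_j$ exist at every point of $Q$ and the equation and conditions hold pointwise. $C^{2,\bar\delta}(\bar Q)$ denotes the set of $w\in C(\bar Q)$ such that $\partial w/\partial x_i$, $\partial^2w/\partial x_i\partial x_j$ ($1\le i,j\le n$) and $\partial^k w/\partial t^k$ for $k=1,\bar\delta$ all lie in $C(\bar Q)$. 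*)

From HB Require Import structures.
From mathcomp Require Import all_boot all_order all_algebra.
From mathcomp Require Import all_classical all_reals all_analysis.
Set Implicit Arguments. Unset Strict Implicit. Unset Printing Implicit Defensive.
Import Order.TTheory GRing.Theory Num.Theory.
Import numFieldNormedType.Exports.
Local Open Scope classical_set_scope.
Local Open Scope ring_scope.

Section Defs.
Variable R : realType.

Definition Gamma (a : R) : R :=
  \int[lebesgue_measure]_(s in `]0%R, +oo[) (s `^ (a - 1) * expR (- s)).

Definition delta_bar (d : R) : nat := if d < 1 then 1%N else 2%N.

Variable n : nat.
Notation V := 'rV[R]_n.

Definition unitv (i : 'I_n) : V := delta_mx 0 i.

Definition pd (g : V -> R) (i : 'I_n) (x : V) : R := 'D_(unitv i) g x.

Definition dx (i : 'I_n) (u : V -> R -> R) : V -> R -> R :=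
  fun x t => pd (fun y => u y t) i x.
Definition dxx (i j : 'I_n) (u : V -> R -> R) : V -> R -> R := dx i (dx j u).
Definition dt (u : V -> R -> R) : V -> R -> R := fun x t => derive1 (u x) t.
Definition dtk (k : nat) (u : V -> R -> R) : V -> R -> R := iter k dt u.

Definition uncurry2 (u : V -> R -> R) : V * R -> R := fun z => u z.1 z.2.

Definition bdry (Om : set V) : set V := closure Om `\` Om.

Definition Qbar (Om : set V) (T : R) : set (V * R) := closure Om `*` `[0, T].
Definition Qset (Om : set V) (T : R) : set (V * R) := Om `*` `]0, T].
Definition Qint (Om : set V) (T : R) : set (V * R) := Om `*` `]0, T[.

Definition caputo (d : R) (u : V -> R -> R) (x : V) (t : R) : R :=
  (Gamma ((delta_bar d)%:R - d))^-1 *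
  \int[lebesgue_measure]_(s in `]0, t[)
     ((t - s) `^ ((delta_bar d)%:R - d - 1) * dtk (delta_bar d) u x s).

(* existence of D_t^delta u (x,t): the needed time derivatives exist on (0,t)
   and the (improper) integral converges (Lebesgue integrability) *)
Definition caputo_exists (d : R) (u : V -> R -> R) (x : V) (t : R) : Prop :=
  (forall s, 0 < s < t ->
     forall m, (m < delta_bar d)%N -> derivable (dtk m u x) s 1) /\
  lebesgue_measure.-integrable `]0, t[
     (fun s => ((t - s) `^ ((delta_bar d)%:R - d - 1) * dtk (delta_bar d) u x s)%:E).

Definition Lop (p : 'I_n -> 'I_n -> V -> R -> R) (q : 'I_n -> V -> R -> R)
  (r : V -> R -> R) (u : V -> R -> R) (x : V) (t : R) : R :=
  - (\sum_(i < n) \sum_(j < n) p i j x t * dxx i j u x t)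
  + (\sum_(i < n) q i x t * dx i u x t) + r x t * u x t.

Definition unif_elliptic (Om : set V) (T : R) (p : 'I_n -> 'I_n -> V -> R -> R) :=
  exists lam : R, 0 < lam /\
    forall x t, Qset Om T (x, t) -> forall xi : V,
      lam * (\sum_(i < n) xi 0 i ^+ 2) <=
      \sum_(i < n) \sum_(j < n) p i j x t * xi 0 i * xi 0 j.

Definition classical_solution (Om : set V) (T d : R)
  (p : 'I_n -> 'I_n -> V -> R -> R) (q : 'I_n -> V -> R -> R) (r f psi : V -> R -> R)
  (phi0 phi1 : V -> R) (u : V -> R -> R) : Prop :=
  [/\ {within Qbar Om T, continuous (uncurry2 u)},
      (forall x t, Qset Om T (x, t) ->
         [/\ caputo_exists d u x t,
             (forall i, derivable (fun y => u y t) x (unitv i)) &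
             (forall i j, derivable (fun y => dx j u y t) x (unitv i))]),
      (forall x t, Qset Om T (x, t) -> caputo d u x t + Lop p q r u x t = f x t),
      (forall x t, bdry Om x -> 0 < t <= T -> u x t = psi x t) /\
      (forall x, closure Om x -> u x 0 = phi0 x) &
      (1 < d -> forall x, Om x ->
         (fun h => h^-1 * (u x h - u x 0)) @ 0^'+ --> phi1 x)].

Definition ext_cont (Om : set V) (T : R) (g : V -> R -> R) : Prop :=
  exists G : V * R -> R, {within Qbar Om T, continuous G} /\
    forall z, Qint Om T z -> G z = g z.1 z.2.

Definition C2k (Om : set V) (T : R) (k : nat) (w : V -> R -> R) : Prop :=
  [/\ {within Qbar Om T, continuous (uncurry2 w)},
      (forall i, (forall z, Qint Om T z -> derivable (fun y => w y z.2) z.1 (unitv i))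
                 /\ ext_cont Om T (dx i w)),
      (forall i j, (forall z, Qint Om T z ->
                      derivable (fun y => dx j w y z.2) z.1 (unitv i))
                   /\ ext_cont Om T (dxx i j w)) &
      (forall m, (1 <= m <= k)%N ->
         (forall z, Qint Om T z -> derivable (dtk m.-1 w z.1) z.2 1)
         /\ ext_cont Om T (dtk m w))].

Definition L0 (p : 'I_n -> 'I_n -> V -> R -> R) (q : 'I_n -> V -> R -> R)
  (r : V -> R -> R) (w : V -> R) (x : V) : R :=
  - (\sum_(i < n) \sum_(j < n) p i j x 0 * pd (pd w j) i x)
  + (\sum_(i < n) q i x 0 * pd w i x) + r x 0 * w x.

Definition bvp_solution (Om : set V)
  (p : 'I_n -> 'I_n -> V -> R -> R) (q : 'I_n -> V -> R -> R) (r f psi : V -> R -> R)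
  (w : V -> R) : Prop :=
  [/\ {within closure Om, continuous w},
      (forall x, Om x -> forall i, derivable w x (unitv i) /\
                         forall j, derivable (pd w j) x (unitv i)),
      (forall x, Om x -> L0 p q r w x = f x 0) &
      (forall x, bdry Om x -> w x = psi x 0)].

End Defs.

From HB Require Import structures.
From mathcomp Require Import all_boot all_order all_algebra.
From mathcomp Require Import all_classical all_reals all_analysis.
From mathcomp Require Import measurable_realfun.
Import Order.TTheory GRing.Theory Num.Theory.
Import numFieldNormedType.Exports.
Local Open Scope classical_set_scope.
Local Open Scope ring_scope.
Set Implicit Arguments. Unset Strict Implicit. Unset Printing Implicit Defensive.

(** Let t -> 0+ in the equation at a fixed x in Omega.  The highest time
    derivative of u is bounded near (x, 0), so the Caputo derivative is
    O(t^(dbar - delta)) and vanishes in the limit.  The spatial derivatives of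
    u(., t) extend continuously to Qbar, hence converge uniformly near x as
    t -> 0+; interchanging this limit with differentiation, they converge to the
    derivatives of phi0 = u(., 0), so L u(x, t) -> L0 phi0 (x) and the equation
    gives L0 phi0 = f(., 0).  With the compatibility condition phi0 = psi(., 0) on
    the boundary, phi0 solves the boundary value problem, and the assumed
    uniqueness does the rest. *)

Lemma cvg_pair_left {X : topologicalType} {Y Z : Type} (G : set_system Y) {FG : Filter G}
    (f : X * Y -> Z) (x : X) (F : set_system Z) :
  f z @[z --> (x, G)] --> F -> f (x, t) @[t --> G] --> F.
Proof.
move=> fF P /fF [[A B] /= [Ax GB] AB]; apply: filterS GB => t Bt.
by apply: (AB (x, t)); split => //; exact: nbhs_singleton.
Qed.

Section RiemannLiouvilleKernel.
Variable R : realType.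
Local Notation mu := (@lebesgue_measure R).

Lemma is_derive_powR_subr (t p s : R) : s < t ->
  is_derive s 1 (fun x => (t - x) `^ p) (- (p * (t - s) `^ (p - 1))).
Proof.
move=> st; rewrite -[X in is_derive _ _ _ X]mulrN1.
have dpow := is_derive1_powR p (ltac:(by rewrite subr_gt0) : 0 < t - s).
have dsub : is_derive s 1 (fun x => t - x) (-1) by rewrite -[-1]sub0r; apply: is_deriveB.
exact: (@is_derive1_comp _ _ (fun x => t - x) s _ _ dpow dsub).
Qed.

Lemma measurable_powR_subr (t p : R) : measurable_fun [set: R] (fun s : R => ((t - s) `^ p)%:E).
Proof.
apply/measurable_EFinP.
apply: (@measurableT_comp _ _ _ _ _ _ ((@powR R)^~ p)) => //.
exact: measurable_funB.
Qed.

Lemma integral_powR_subr_oc_le (a t b : R) : 0 < a -> b < t ->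
  (\int[mu]_(s in `]0%R, b]) ((t - s) `^ (a - 1))%:E <= (t `^ a / a)%:E)%E.
Proof.
move=> a0 bt; have [b0|b0] := leP b 0.
  by rewrite set_itv_ge -?leNgt ?bnd_simp // integral_set0 lee_fin divr_ge0 ?powR_ge0 ?ltW.
rewrite integral_itv_obnd_cbnd; last exact: measurable_funS (measurable_powR_subr _ _).
pose F s := - (a^-1 * (t - s) `^ a).
have dF s : s < t -> is_derive s 1 F ((t - s) `^ (a - 1)).
  move=> st; have := is_deriveN (is_deriveZ a^-1 (is_derive_powR_subr a st)).
  congr is_derive.
  by rewrite scalerN opprK /GRing.scale /= mulKf ?gt_eqF.
have contF : {within `[0, b], continuous F}.
  apply: derivable_within_continuous => s; rewrite in_itv /= => /andP[_ sb].
  by have [] := dF s (le_lt_trans sb bt).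
rewrite (@continuous_FTC2 _ _ F) //; first last.
- move=> s; rewrite in_itv /= => /andP[_ sb].
  by rewrite derive1E; have [_ ->] := dF s (lt_trans sb bt).
- have [_ cF0 cFb] := (continuous_within_itvP _ b0).1 contF.
  by split => // s; rewrite in_itv /= => /andP[_ sb]; have [] := dF s (lt_trans sb bt).
- apply: derivable_within_continuous => s; rewrite in_itv /= => /andP[_ sb].
  by have [] := is_derive_powR_subr (a - 1) (le_lt_trans sb bt).
rewrite -EFinD lee_fin /F subr0 opprK [a^-1 * t `^ a]mulrC gerDr oppr_le0.
by rewrite mulr_ge0 ?powR_ge0 // invr_ge0 ltW.
Qed.

Lemma integral_powR_subr_le (a t : R) : 0 < a ->
  (\int[mu]_(s in `]0%R, t[) ((t - s) `^ (a - 1))%:E <= (t `^ a / a)%:E)%E.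
Proof.
move=> a0; rewrite itv_bnd_open_bigcup.
have ndF : nondecreasing_seq (fun n => `]0%R, t - n.+1%:R^-1]%classic).
  move=> n m nm; rewrite subsetEset => s /=; rewrite !in_itv /= => /andP[-> sn].
  by rewrite (le_trans sn) // lerB // lef_pV2 ?posrE // ler_nat.
have cvgI := @ge0_nondecreasing_set_cvg_integral _ _ _ _ _ mu ndF (fun=> measurable_itv _)
  (fun=> measurable_funS measurableT (@subsetT _ _) (measurable_powR_subr t (a - 1)))
  (fun _ s _ => powR_ge0 _ _).
rewrite -(cvg_lim _ cvgI) //; apply: lime_le; first by apply/cvg_ex; eexists; exact: cvgI.
apply: nearW => n; apply: integral_powR_subr_oc_le => //.
by rewrite ltrBlDr ltrDl invr_gt0.
Qed.

Lemma RL_integral_le (a t M : R) (g : R -> R) : 0 < a -> 0 <= M ->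
  mu.-integrable `]0%R, t[ (EFin \o (fun s => (t - s) `^ (a - 1) * g s)) ->
  (forall s, 0 < s < t -> `|g s| <= M) ->
  `|\int[mu]_(s in `]0%R, t[) ((t - s) `^ (a - 1) * g s)| <= M * (t `^ a / a).
Proof.
move=> a0 M0 ig gM.
(* [lebesgue_measure] lives on the sigma-algebra generated by the intervals. *)
have mD : measurable (`]0%R, t[ : set (g_sigma_algebraType R.-ocitv.-measurable)).
  exact: measurable_itv.
apply: (le_trans (@le_normr_Rintegral _ _ _ mu _ (fun s => (t - s) `^ (a - 1) * g s) mD ig)).
have fin := integrable_fin_num mD (integrable_abse ig).
rewrite -[leRHS]/(fine (M * (t `^ a / a))%:E); apply: fine_le => //.
apply: (@le_trans _ _ (\int[mu]_(s in `]0%R, t[) (M%:E * ((t - s) `^ (a - 1))%:E))%E).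
  apply: ge0_le_integral => //.
  - exact: measurable_int (integrable_abse ig).
  - apply: emeasurable_funM => //.
    exact: measurable_funS measurableT (@subsetT _ _) (measurable_powR_subr t (a - 1)).
  move=> s; rewrite /= in_itv /= => st.
  rewrite -EFinM lee_fin normrM ger0_norm ?powR_ge0 // mulrC.
  by apply: ler_wpM2r; [exact: powR_ge0 | exact: gM].
rewrite ge0_integralZl_EFin //; first last.
- exact: measurable_funS measurableT (@subsetT _ _) (measurable_powR_subr t (a - 1)).
- by move=> s _; rewrite lee_fin powR_ge0.
rewrite EFinM; apply: lee_pmul => //; last exact: integral_powR_subr_le.
by apply: integral_ge0 => s _; rewrite lee_fin powR_ge0.
Qed.

Lemma RL_integral_cvg0 (a : R) (g : R -> R) : 0 < a -> bounded_near g 0^'+ ->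
  (\forall t \near 0^'+,
     mu.-integrable `]0%R, t[ (EFin \o (fun s => (t - s) `^ (a - 1) * g s))) ->
  \int[mu]_(s in `]0%R, t[) ((t - s) `^ (a - 1) * g s) @[t --> 0^'+] --> 0.
Proof.
move=> a0 /ex_bound [M gM] ig.
have M0 : 0 <= M by have [s /= /(le_trans (normr_ge0 _))] := filter_ex gM.
have [eta /= eta0 gMeta] := gM.
have bound : (fun t => M * (t `^ a / a)) @ 0^'+ --> 0.
  suff : (fun t => M * (t `^ a / a)) @ 0^'+ --> M * (0 / a) by rewrite mul0r mulr0.
  apply: cvgM; first exact: cvg_cst.
  by apply: cvgM; [exact: powR_cvg0 | exact: cvg_cst].
have Nbound : (fun t => - (M * (t `^ a / a))) @ 0^'+ --> 0.
  by rewrite -[X in _ --> X]oppr0; exact: cvgN.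
apply: (squeeze_cvgr _ Nbound bound).
near=> t; rewrite -ler_norml; apply: RL_integral_le => //.
  by near: t.
move=> s /andP[s0 st]; apply: gMeta => //=.
rewrite sub0r normrN gtr0_norm //; apply: lt_trans st _.
by near: t; exact: nbhs_right_lt eta0.
Unshelve. all: by end_near. Qed.
End RiemannLiouvilleKernel.

Section DirectionalDerivative.
Variables (R : realType) (V : normedModType R).

Lemma is_derive_along_line (g : V -> R) (x e : V) (c : R) :
  derivable g (c *: e + x) e ->
  is_derive c 1 (fun s => g (s *: e + x)) ('D_e g (c *: e + x)).
Proof.
move=> dg.
have quotE : (fun h : R => h^-1 *: ((fun s : R => g (s *: e + x)) (h *: 1 + c) - g (c *: e + x)))
    = (fun h : R => h^-1 *: (g (h *: e + (c *: e + x)) - g (c *: e + x))).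
  by apply/funext => h; rewrite [h *: 1]mulr1 scalerDl addrA.
have dl : derivable (fun s : R => g (s *: e + x)) c 1 by rewrite /derivable /= quotE.
by split => //; rewrite /derive /= quotE.
Qed.

Lemma MVT_along_line (g : V -> R) (x e : V) (a : R) :
  (forall c, `|c| <= `|a| -> derivable g (c *: e + x) e) ->
  exists2 c, `|c| <= `|a| & g (a *: e + x) - g x = a * 'D_e g (c *: e + x).
Proof.
move=> dg; pose gl s := g (s *: e + x).
have gl0 : gl 0 = g x by rewrite /gl scale0r add0r.
have mvt b b' : b <= b' -> `|b| <= `|a| -> `|b'| <= `|a| ->
    exists2 c, c \in `[b, b'] & gl b' - gl b = 'D_e g (c *: e + x) * (b' - b).
  move=> bb' ba b'a.
  have inseg c : b <= c <= b' -> `|c| <= `|a|.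
    move: ba b'a; rewrite !ler_norml => /andP[ab _] /andP[_ b'a] /andP[bc cb'].
    by rewrite (le_trans ab bc) (le_trans cb' b'a).
  apply: MVT_segment => //.
  - move=> c; rewrite in_itv /= => /andP[/ltW bc /ltW cb'].
    exact/is_derive_along_line/dg/inseg/andP.
  - apply: derivable_within_continuous => c; rewrite in_itv /= => bcb'.
    by have [] := is_derive_along_line (dg c (inseg c bcb')).
rewrite -gl0 -/(gl a); have [a0|a0] := leP 0 a.
- have [c + ->] := mvt 0 a a0 ltac:(by rewrite normr0) (lexx _).
  rewrite in_itv /= => /andP[c0 ca].
  exists c; first by rewrite !ger0_norm // (le_trans c0).
  by rewrite subr0 mulrC.
- have [c + E] := mvt a 0 (ltW a0) (lexx _) ltac:(by rewrite normr0).
  rewrite in_itv /= => /andP[ac c0].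
  exists c; first by rewrite !ler0_norm ?lerN2 // ltW.
  by rewrite -[LHS]opprB E sub0r mulrN opprK mulrC.
Qed.

(* Joint convergence along (x, G) is what makes the convergence of the
   derivatives uniform in y near x. *)
Lemma is_derive_param_limit {S : Type} (G : set_system S) {PG : ProperFilter G}
    (w : V -> S -> R) (h : V -> R) (x e : V) (L : R) :
  (\forall y \near x, w y t @[t --> G] --> h y) ->
  (\forall y \near x & t \near G, derivable (w^~ t) y e) ->
  'D_e (w^~ z.2) z.1 @[z --> (x, G)] --> L ->
  is_derive x e h L.
Proof.
move=> wh dw DL.
suff qL : (fun a : R => a^-1 *: (h (a *: e + x) - h x)) @ 0^' --> L.
  have dh : derivable h x e by apply/cvg_ex; exists L.
  by split => //; rewrite /derive (cvg_lim _ qL).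
apply/cvgrPdist_le => eps eps0.
have [[A B] /= [xA GB] AB] : \forall y \near x & t \near G,
    derivable (w^~ t) y e /\ `|L - 'D_e (w^~ t) y| <= eps.
  move/cvgrPdist_le/(_ eps eps0): DL => DLe.
  exact: filterI dw DLe.
have /nbhs_ballP [r r0 rAC] : nbhs x (A `&` [set y | w y t @[t --> G] --> h y]).
  exact: filterI.
have small : \forall a \near 0^', `|a *: e| < r.
  have Ze : (fun a : R => a *: e) @ (0 : R) --> 0.
    by rewrite -[X in _ --> X](scale0r e); exact: scalel_continuous.
  exact: nbhs_dnbhs (cvgr0_norm_lt _ Ze r r0).
near=> a.
have a0 : a != 0 by near: a; exact: nbhs_dnbhs_neq.
have near_x c : `|c| <= `|a| -> (A `&` [set y | w y t @[t --> G] --> h y]) (c *: e + x).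
  move=> ca; apply: rAC; rewrite -ball_normE /= distrC addrK.
  rewrite (le_lt_trans _ (near small a _)) // !normrZ ler_wpM2r //.
have lim_quot : a^-1 * (w (a *: e + x) t - w x t) @[t --> G] --> a^-1 * (h (a *: e + x) - h x).
  apply: cvgM; first exact: cvg_cst.
  apply: cvgB; first exact: (near_x a (lexx _)).2.
  by have := (near_x 0 ltac:(by rewrite normr0)).2; rewrite /= scale0r add0r.
suff : closed_ball_ Num.norm L (eps : R) (a^-1 * (h (a *: e + x) - h x)) by [].
apply: (closed_cvg _ (@closed_closed_ball_ _ _ L eps) _ _ lim_quot).
apply: filterS GB => t Bt.
have ABt c (ca : `|c| <= `|a|) := AB (c *: e + x, t) (conj (near_x c ca).1 Bt).
have [c ca ->] := @MVT_along_line (w^~ t) x e a (fun c ca => (ABt c ca).1).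
by rewrite /closed_ball_ /= mulrA mulVf // mul1r; exact: (ABt c ca).2.
Unshelve. all: by end_near. Qed.
End DirectionalDerivative.

Section InitialTrace.
Variables (R : realType) (n : nat) (Om : set 'rV[R]_n) (T : R).
Hypotheses (Om_open : open Om) (T_gt0 : 0 < T).
Local Notation V := 'rV[R]_n.

Lemma Qint_near (x : V) : Om x -> \forall y \near x & t \near 0^'+, Qint Om T (y, t).
Proof.
move=> Ox; near=> y t; split => /=.
  by near: y; exact: open_nbhs_nbhs.
rewrite in_itv /=; apply/andP; split.
  by near: t; exact: nbhs_right_gt.
by near: t; exact: nbhs_right_lt.
Unshelve. all: by end_near. Qed.

Lemma Qset_near (x : V) : Om x -> \forall t \near 0^'+, Qset Om T (x, t).
Proof.
move=> Ox; near=> t; split => //=; rewrite in_itv /=; apply/andP; split.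
  by near: t; exact: nbhs_right_gt.
by near: t; exact: nbhs_right_le.
Unshelve. all: by end_near. Qed.

Lemma Qbar_cvg (G : V * R -> R) (x : V) : {within Qbar Om T, continuous G} -> Om x ->
  G z @[z --> (x, 0^'+)] --> G (x, 0).
Proof.
move=> /subspace_continuousP cG Ox.
have Qx0 : Qbar Om T (x, 0).
  by split; [exact: subset_closure | rewrite /= in_itv /= lexx ltW].
apply: cvg_trans (cG _ Qx0); apply: cvg_app => P [[A B] /= [xA B0] ABP].
have AB_near : \forall y \near x & t \near 0^'+, A y /\ B t.
  by exists (A, B) => [|[y t] //]; split => //=; exact: cvg_within.
apply: filterS (filterI AB_near (Qint_near Ox)) => -[y t] /= [[Ay Bt] [/= Oy]].
rewrite in_itv /= => /andP[t0 tT]; apply: (ABP (y, t)) => //.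
by split; [exact: subset_closure | rewrite /= in_itv /= !ltW].
Qed.

Lemma ext_cont_cvg (g : V -> R -> R) (G : V * R -> R) (x : V) :
  {within Qbar Om T, continuous G} -> (forall z, Qint Om T z -> G z = g z.1 z.2) ->
  Om x -> g z.1 z.2 @[z --> (x, 0^'+)] --> G (x, 0).
Proof.
move=> cG GE Ox; apply: cvg_trans (Qbar_cvg cG Ox); apply: near_eq_cvg.
by apply: filterS (Qint_near Ox) => -[y t] /GE ->.
Qed.

Lemma initial_trace_dx (w : V -> R -> R) (h : V -> R) (i : 'I_n) (x : V) :
  (forall z, Qint Om T z -> derivable (fun y => w y z.2) z.1 (unitv R i)) ->
  ext_cont Om T (dx i w) ->
  (forall y, Om y -> w y t @[t --> 0^'+] --> h y) ->
  Om x -> derivable h x (unitv R i) /\ dx i w x t @[t --> 0^'+] --> pd h i x.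
Proof.
move=> dw [G [cG GE]] wh Ox.
have DL := ext_cont_cvg cG GE Ox.
have [dh DhE] : is_derive x (unitv R i) h (G (x, 0)).
  apply: (is_derive_param_limit (G := 0^'+) (w := w)) DL.
  - by apply: filterS (open_nbhs_nbhs (conj Om_open Ox)); exact: wh.
  - by apply: filterS (Qint_near Ox) => z /dw.
by split => //; rewrite /pd DhE; exact: cvg_pair_left DL.
Qed.

Lemma delta_bar_subr_gt0 (d : R) : (0 < d < 1) \/ (1 < d < 2) -> 0 < (delta_bar d)%:R - d.
Proof.
rewrite /delta_bar subr_gt0; case=> /andP[d0 d1]; first by rewrite d1.
by rewrite [d < 1]ltNge (ltW d0).
Qed.

Lemma caputo_cvg0 (d : R) (u : V -> R -> R) (x : V) : (0 < d < 1) \/ (1 < d < 2) ->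
  C2k Om T (delta_bar d) u -> Om x -> (\forall t \near 0^'+, caputo_exists d u x t) ->
  caputo d u x t @[t --> 0^'+] --> 0.
Proof.
move=> hd [_ _ _ Dt] Ox ex.
have [_ [G [cG GE]]] := Dt (delta_bar d) (ltac:(by rewrite /delta_bar; case: ifP)).
have bdd : bounded_near (dtk (delta_bar d) u x) 0^'+.
  by apply: cvg_bounded; exact: cvg_pair_left (ext_cont_cvg cG GE Ox).
rewrite -[X in _ --> X](mulr0 (Gamma ((delta_bar d)%:R - d))^-1); apply: cvgM; first exact: cvg_cst.
apply: RL_integral_cvg0 (delta_bar_subr_gt0 hd) bdd _.
by apply: filterS ex => t [].
Qed.

Section ClassicalSolution.
Variables (u : V -> R -> R) (phi0 : V -> R) (k : nat).
Hypotheses (u_C2k : C2k Om T k u) (u_init : forall y, Om y -> u y 0 = phi0 y).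

Lemma C2k_cvg_init (y : V) : Om y -> u y t @[t --> 0^'+] --> phi0 y.
Proof.
case: u_C2k => cu _ _ _ Oy.
by rewrite -u_init //; exact: cvg_pair_left (Qbar_cvg cu Oy).
Qed.

Lemma C2k_trace_dx (i : 'I_n) (x : V) : Om x ->
  derivable phi0 x (unitv R i) /\ dx i u x t @[t --> 0^'+] --> pd phi0 i x.
Proof.
case: u_C2k => _ Dx _ _; have [du ecu] := Dx i.
exact: initial_trace_dx du ecu C2k_cvg_init.
Qed.

Lemma C2k_trace_dxx (i j : 'I_n) (x : V) : Om x ->
  derivable (pd phi0 j) x (unitv R i) /\ dxx i j u x t @[t --> 0^'+] --> pd (pd phi0 j) i x.
Proof.
case: u_C2k => _ _ Dxx _; have [du ecu] := Dxx i j.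
exact: initial_trace_dx du ecu (fun y Oy => (C2k_trace_dx j Oy).2).
Qed.

Lemma Lop_cvg_L0 (p : 'I_n -> 'I_n -> V -> R -> R) (q : 'I_n -> V -> R -> R)
    (r : V -> R -> R) (x : V) :
  (forall i j, {within Qbar Om T, continuous (uncurry2 (p i j))}) ->
  (forall i, {within Qbar Om T, continuous (uncurry2 (q i))}) ->
  {within Qbar Om T, continuous (uncurry2 r)} ->
  Om x -> Lop p q r u x t @[t --> 0^'+] --> L0 p q r phi0 x.
Proof.
move=> cp cq cr Ox.
have coef g : {within Qbar Om T, continuous (uncurry2 g)} -> g x t @[t --> 0^'+] --> g x 0.
  by move=> cg; exact: cvg_pair_left (Qbar_cvg cg Ox).
apply: cvgD; first apply: cvgD.
- apply: cvgN; apply: cvg_big => [|i _]; first exact: add_continuous.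
  apply: cvg_big => [|j _]; first exact: add_continuous.
  by apply: cvgM; [exact: coef | exact: (C2k_trace_dxx i j Ox).2].
- apply: cvg_big => [|i _]; first exact: add_continuous.
  by apply: cvgM; [exact: coef | exact: (C2k_trace_dx i Ox).2].
- by apply: cvgM; [exact: coef | exact: C2k_cvg_init].
Qed.
End ClassicalSolution.

Lemma initial_value_bvp_solution (d : R) (p : 'I_n -> 'I_n -> V -> R -> R)
    (q : 'I_n -> V -> R -> R) (r f psi : V -> R -> R) (phi0 phi1 : V -> R)
    (u : V -> R -> R) :
  (0 < d < 1) \/ (1 < d < 2) ->
  (forall i j, {within Qbar Om T, continuous (uncurry2 (p i j))}) ->
  (forall i, {within Qbar Om T, continuous (uncurry2 (q i))}) ->
  {within Qbar Om T, continuous (uncurry2 r)} ->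
  {within Qbar Om T, continuous (uncurry2 f)} ->
  {within closure Om, continuous phi0} ->
  (forall x, bdry Om x -> phi0 x = psi x 0) ->
  classical_solution Om T d p q r f psi phi0 phi1 u ->
  C2k Om T (delta_bar d) u ->
  bvp_solution Om p q r f psi phi0.
Proof.
move=> hd cp cq cr cf cphi0 bd [_ Du eq_u [_ u0] _] Cu.
have u_init y : Om y -> u y 0 = phi0 y by move=> Oy; exact/u0/subset_closure.
split => // x Ox.
  split=> [|j]; first exact: (C2k_trace_dx Cu u_init i Ox).1.
  exact: (C2k_trace_dxx Cu u_init i j Ox).1.
have ex : \forall t \near 0^'+, caputo_exists d u x t.
  by apply: filterS (Qset_near Ox) => t /Du [].
have : f x t @[t --> 0^'+] --> 0 + L0 p q r phi0 x.
  apply: cvg_trans _ (cvgD (caputo_cvg0 hd Cu Ox ex) (Lop_cvg_L0 Cu u_init cp cq cr Ox)).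
  apply: near_eq_cvg; near=> t; apply: eq_u.
  by near: t; exact: Qset_near.
rewrite add0r => fL0; exact: cvg_unique fL0 (cvg_pair_left (Qbar_cvg cf Ox)).
Unshelve. all: by end_near. Qed.
End InitialTrace.

Unset Implicit Arguments.

Theorem corollary2p7 (R : realType) (n : nat) (Om : set 'rV[R]_n) (T d : R)
  (p : 'I_n -> 'I_n -> 'rV[R]_n -> R -> R) (q : 'I_n -> 'rV[R]_n -> R -> R)
  (r f psi : 'rV[R]_n -> R -> R) (phi0 phi1 : 'rV[R]_n -> R)
  (u : 'rV[R]_n -> R -> R) :
  (0 < n)%N ->
  open Om -> connected Om -> Om !=set0 -> bounded_set Om ->
  0 < T ->
  (0 < d < 1) \/ (1 < d < 2) ->
  unif_elliptic Om T p ->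
  (forall i j, {within Qbar Om T, continuous (uncurry2 (p i j))}) ->
  (forall i, {within Qbar Om T, continuous (uncurry2 (q i))}) ->
  {within Qbar Om T, continuous (uncurry2 r)} ->
  {within Qbar Om T, continuous (uncurry2 f)} ->
  {within bdry Om `*` `[0, T], continuous (uncurry2 psi)} ->
  {within closure Om, continuous phi0} ->
  {within closure Om, continuous phi1} ->
  (forall x, bdry Om x -> phi0 x = psi x 0) ->
  classical_solution Om T d p q r f psi phi0 phi1 u ->
  C2k Om T (delta_bar d) u ->
  (forall w1 w2, bvp_solution Om p q r f psi w1 -> bvp_solution Om p q r f psi w2 ->
     forall x, closure Om x -> w1 x = w2 x) ->
  bvp_solution Om p q r f psi phi0 /\
  (forall w, bvp_solution Om p q r f psi w -> forall x, closure Om x -> w x = phi0 x).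
Proof.
move=> _ Om_open _ _ _ T_gt0 hd _ cp cq cr cf _ cphi0 _ bd sol Cu bvp_uniq.
have phi0_sol := initial_value_bvp_solution Om_open T_gt0 hd cp cq cr cf cphi0 bd sol Cu.
by split => // w w_sol x clx; exact: bvp_uniq.
Qed.
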